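(* Let $n\ge2$, $\tau_1,\dots,\tau_n\in\mathbb{C}$, $\vartheta\notin-\mathbb{N}$ (and $\vartheta\neq0$). Then, as identities of formal power series in the variables $z_{j,k}$ ($1\le k<j\le n$): for $1\le r_1<r_2\le n-1$, $$\partial_{z_{r_2,r_1}}(\mathcal{X}_A)=\sum_{s=1}^{r_1}\tau_sP_{[s,r_1]}\,\mathcal{X}_A[s,r_2],$$ and for $r\in\{1,\dots,n-1\}$, $$\partial_{z_{n,r}}(\mathcal{X}_A)=\frac{\tau_n}{\vartheta}\sum_{s=1}^{r}\tau_sP_{[s,r]}\,\mathcal{X}_A[s,n].$$
   Context: $(c)_i=c(c+1)\cdots(c+i-1)$. $\Gamma_A=\bigoplus_{1\le j<i\le n}\mathbb{N}\epsilon_{i,j}$; for $\beta\in\Gamma_A$: $\beta_{\underline 1}=0$, $\beta_{\underline i}=\sum_{r=1}^{i-1}\beta_{i,r}$, $\beta_{\overline n}=0$, $\beta_{\overline j}=\sum_{s=j+1}^n\beta_{s,j}$, $\beta!=\prod\beta_{j,k}!$, $z^\beta=\prod z_{j,k}^{\beta_{j,k}}$. $\mathcal{X}_A=\mathcal{X}_A(\tau_1,\dots,\tau_n;\vartheta)\{z_{j,k}\}=\sum_{\beta\in\Gamma_A}\frac{\left[\prod_{s=1}^{n-1}(\tau_s-\beta_{\underline s})_{\beta_{\overline s}}\right](\tau_n)_{\beta_{\underline n}}}{\beta!\,(\vartheta)_{\beta_{\underline n}}}z^\beta$. For $1\le i<j\le n-1$, $\mathcal{X}_A[i,j]$ is $\mathcal{X}_A$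 with $\tau_i$ replaced by $\tau_i+1$ and $\tau_j$ by $\tau_j-1$; for $k\le n-1$, $\mathcal{X}_A[k,n]$ is $\mathcal{X}_A$ with $\tau_k\to\tau_k+1$, $\tau_n\to\tau_n+1$, $\vartheta\to\vartheta+1$ (and $\mathcal{X}_A[k,k]$, $\mathcal X_A[k,n]$ for the evident index ranges are defined by these rules). Path polynomials: for positive integers $k_1<k_2$, a path from $k_1$ to $k_2$ is a sequence $k_1=m_0<m_1<\cdots<m_r=k_2$, and $P_{[k_1,k_2]}=\sum_{\text{paths}}(-1)^rz_{m_1,m_0}z_{m_2,m_1}\cdots z_{m_r,m_{r-1}}$; $P_{[k,k]}=1$. *)

From HB Require Import structures.
From mathcomp Require Import all_boot all_algebra.
From mathcomp Require Import reals realfun.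
From mathcomp Require Export complex.

Set Implicit Arguments.
Unset Strict Implicit.
Unset Printing Implicit Defensive.

Import GRing.Theory Num.Theory.
Local Open Scope ring_scope.

Section FPS.
Variable C : fieldType.
Variable n : nat.

(* Variables z_{j,k}, 1 <= k < j <= n, encoded 0-based as pairs (j-1,k-1). *)
Definition var := {p : 'I_n * 'I_n | (p.2 < p.1)%N}.

Definition mexp := {ffun var -> nat}.

Definition fps := mexp -> C.

(* beta_{j,k} with 1-based indices (0 if (j,k) is not a variable). *)
Definition ex (b : mexp) (j k : nat) : nat :=
  \sum_(v : var | ((val v).1.+1 == j) && ((val v).2.+1 == k)) b v.

Definition unit_exp (j k : nat) : mexp :=
  [ffun v : var => (((val v).1.+1 == j) && ((val v).2.+1 == k) : nat)].

Definition mexp0 : mexp := [ffun _ => 0%N].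
Definition mexp_add (a b : mexp) : mexp := [ffun v => (a v + b v)%N].
Definition mexp_sub (a b : mexp) : mexp := [ffun v => (a v - b v)%N].
Definition mexp_le (a b : mexp) : bool := [forall v, (a v <= b v)%N].

Definition under (b : mexp) (i : nat) : nat := \sum_(1 <= r < i) ex b i r.
Definition over (b : mexp) (j : nat) : nat := \sum_(j.+1 <= s < n.+1) ex b s j.
Definition mfact (b : mexp) : nat := \prod_(v : var) (b v)`!.

Definition rising (c : C) (i : nat) : C := \prod_(0 <= t < i) (c + t%:R).

(* X_A(tau_1,...,tau_n; theta); tau is 1-based (tau 0 is unused). *)
Definition XA (tau : nat -> C) (th : C) : fps := fun b =>
  (\prod_(1 <= s < n) rising (tau s - (under b s)%:R) (over b s))
  * rising (tau n) (under b n)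
  / ((mfact b)%:R * rising th (under b n)).

Definition upd (tau : nat -> C) (i : nat) (c : C) : nat -> C :=
  fun s => if s == i then c else tau s.

Definition XAsh (tau : nat -> C) (th : C) (i j : nat) : fps :=
  if (j < n)%N then
    XA (upd (upd tau i (tau i + 1)) j (tau j - 1)) th
  else
    XA (upd (upd tau i (tau i + 1)) n (tau n + 1)) (th + 1).

Definition dz (j k : nat) (f : fps) : fps := fun b =>
  ((ex b j k).+1)%:R * f (mexp_add b (unit_exp j k)).

Definition poly_terms := seq (C * mexp).

Definition pmul (p : poly_terms) (f : fps) : fps := fun b =>
  \sum_(t <- p) (if mexp_le t.2 b then t.1 * f (mexp_sub b t.2) else 0).

Definition fps_add (f g : fps) : fps := fun b => f b + g b.
Definition fps_scale (c : C) (f : fps) : fps := fun b => c * f b.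
Definition fps0 : fps := fun _ => 0.

Fixpoint subseqs (T : Type) (s : seq T) : seq (seq T) :=
  if s is x :: s' then [seq x :: t | t <- subseqs s'] ++ subseqs s'
  else [:: [::]].

(* paths k1 = m_0 < m_1 < ... < m_r = k2, listed as [:: m_1; ...; m_r] *)
Definition paths (k1 k2 : nat) : seq (seq nat) :=
  if (k1 < k2)%N then [seq rcons t k2 | t <- subseqs (iota k1.+1 (k2 - k1.+1))]
  else [::].

Definition path_mono (k1 : nat) (p : seq nat) : mexp :=
  foldr mexp_add mexp0 (pairmap (fun a b => unit_exp b a) k1 p).

Definition Ppath (k1 k2 : nat) : poly_terms :=
  if k1 == k2 then [:: (1, mexp0)]
  else [seq ((-1) ^+ size p, path_mono k1 p) | p <- paths k1 k2].

End FPS.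

Arguments XA {C} n tau th b.
Arguments XAsh {C} n tau th i j b.
Arguments dz {C} n j k f b.
Arguments Ppath {C} n k1 k2.
Arguments pmul {C} {n} p f b.
Arguments fps_add {C} {n} f g b.
Arguments fps_scale {C} {n} c f b.
Arguments fps0 {C} {n} b.

(* Fix the row index r2 and write D_k for the derivative of X_A in z_{r2,k}.
   Comparing coefficients and using (c)_(a+1) = c (c+1)_a, the shift
   beta -> beta + eps_{r2,m} of the hypergeometric coefficients of X_A yields
   the contiguous relation
     D_m + sum_(k < m) z_{m,k} D_k = tau_m X_A[m,r2]
   (with an extra factor tau_n / theta when r2 = n).  This is a unitriangular
   system in D_1, ..., D_(r2-1), and the path polynomials invert it because
   they satisfy P_[a,r] = - sum_(a < s <= r) P_[s,r] z_{s,a}. *)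
From Pilot Require Import Defs.
From mathcomp Require Import all_boot all_algebra.
From mathcomp Require Import boolp reals realfun complex.
From mathcomp Require Import ring zify.
Import GRing.Theory Num.Theory.
Local Open Scope ring_scope.

Section Exponents.
Context {n : nat}.

Lemma exists_var (j k : nat) : (1 <= k)%N -> (k < j)%N -> (j <= n)%N ->
  exists v : var n, forall w : var n,
    ((val w).1.+1 == j) && ((val w).2.+1 == k) = (w == v).
Proof.
move=> k_ge1 lt_kj le_jn.
have lt_j'n : (j.-1 < n)%N by lia.
have lt_k'n : (k.-1 < n)%N by lia.
have lt_k'j' : ((Ordinal lt_j'n, Ordinal lt_k'n).2 < (Ordinal lt_j'n, Ordinal lt_k'n).1)%N.
  by rewrite /=; lia.
exists (exist _ (Ordinal lt_j'n, Ordinal lt_k'n) lt_k'j') => w.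
rewrite -val_eqE /=; case: w => [[a b] /= _].
rewrite xpair_eqE -!val_eqE /=.
by apply/idP/idP => /andP[/eqP ? /eqP ?]; apply/andP; split; apply/eqP; lia.
Qed.

Lemma var_of_index j k (b : mexp n) : (1 <= k)%N -> (k < j)%N -> (j <= n)%N ->
  exists v : var n, ex b j k = b v /\ forall w, unit_exp n j k w = (w == v : nat).
Proof.
move=> k_ge1 lt_kj le_jn; have [v vE] := exists_var j k k_ge1 lt_kj le_jn.
exists v; split; last by move=> w; rewrite ffunE vE.
by rewrite /ex (eq_bigl (pred1 v)) ?big_pred1_eq // => w; rewrite vE.
Qed.

Lemma sum_nat_delta (a c k : nat) : (a <= k < c)%N ->
  (\sum_(a <= r < c) (r == k : nat))%N = 1%N.
Proof.
move=> k_in.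
rewrite (bigD1_seq k) ?mem_index_iota ?iota_uniq //= eqxx big1 //.
by move=> i /negbTE ->.
Qed.

Lemma ex_mexp_add (a c : mexp n) i r :
  ex (mexp_add a c) i r = (ex a i r + ex c i r)%N.
Proof. by rewrite /ex -big_split; apply: eq_bigr => v _; rewrite ffunE. Qed.

Lemma ex_unit_exp j k i r : (1 <= k)%N -> (k < j)%N -> (j <= n)%N ->
  ex (unit_exp n j k) i r = ((i == j) && (r == k) : nat).
Proof.
move=> k_ge1 lt_kj le_jn; have [v vE] := exists_var j k k_ge1 lt_kj le_jn.
rewrite /ex (eq_bigr (fun w => (w == v : nat))) => [|w _]; last by rewrite ffunE vE.
rewrite big_mkcond (bigD1 v) //= big1 => [|w /negbTE ->]; last by case: ifP.
have := vE v; rewrite eqxx => /andP[/eqP <- /eqP <-].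
by rewrite addn0 !(eq_sym i) !(eq_sym r); case: ifP.
Qed.

Lemma under_mexp_add (a c : mexp n) i :
  Defs.under (mexp_add a c) i = (Defs.under a i + Defs.under c i)%N.
Proof.
by rewrite /Defs.under -big_split; apply: eq_bigr => r _; rewrite ex_mexp_add.
Qed.

Lemma over_mexp_add (a c : mexp n) i :
  Defs.over (mexp_add a c) i = (Defs.over a i + Defs.over c i)%N.
Proof.
by rewrite /Defs.over -big_split; apply: eq_bigr => r _; rewrite ex_mexp_add.
Qed.

Lemma under_unit_exp j k i : (1 <= k)%N -> (k < j)%N -> (j <= n)%N ->
  Defs.under (unit_exp n j k) i = (i == j : nat).
Proof.
move=> k_ge1 lt_kj le_jn; rewrite /Defs.under.
under eq_bigr do rewrite ex_unit_exp //.
have [->|_] /= := eqVneq i j; last by rewrite big1.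
by apply: sum_nat_delta; lia.
Qed.

Lemma over_unit_exp j k i : (1 <= k)%N -> (k < j)%N -> (j <= n)%N ->
  Defs.over (unit_exp n j k) i = (i == k : nat).
Proof.
move=> k_ge1 lt_kj le_jn; rewrite /Defs.over.
under eq_bigr do rewrite ex_unit_exp //.
have [->|_] /= := eqVneq i k; last by rewrite big1 // => s _; rewrite andbF.
under eq_bigr do rewrite andbT.
by apply: sum_nat_delta; lia.
Qed.

Lemma mfact_add_unit_exp j k (b : mexp n) :
  (1 <= k)%N -> (k < j)%N -> (j <= n)%N ->
  mfact (mexp_add b (unit_exp n j k)) = (mfact b * (ex b j k).+1)%N.
Proof.
move=> k_ge1 lt_kj le_jn; have [v [-> vE]] := var_of_index j k b k_ge1 lt_kj le_jn.
rewrite /mfact (bigD1 v) //= [in RHS](bigD1 v) //= ffunE vE eqxx addn1 factS.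
rewrite (eq_bigr (fun w => (b w)`!)) => [|w /negbTE w_v]; last first.
  by rewrite ffunE vE w_v addn0.
by rewrite [RHS]mulnC mulnA.
Qed.

Lemma mexp_subK (e b : mexp n) : mexp_le e b -> mexp_add (mexp_sub b e) e = b.
Proof.
by move=> /forallP le_eb; apply/ffunP => v; have := le_eb v; rewrite !ffunE => /subnK.
Qed.

Lemma ex_eq0_unit_exp j k (b : mexp n) : (1 <= k)%N -> (k < j)%N -> (j <= n)%N ->
  ~~ mexp_le (unit_exp n j k) b -> ex b j k = 0%N.
Proof.
move=> k_ge1 lt_kj le_jn; have [v [-> vE]] := var_of_index j k b k_ge1 lt_kj le_jn.
apply: contraNeq; rewrite -lt0n => bv_gt0.
by apply/forallP => w; rewrite vE; case: eqP => [->|].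
Qed.

End Exponents.

Section MonomialMultiplication.
Variables (C : fieldType) (n : nat).
Implicit Types (f g : fps C n) (b e : mexp n).

Definition mono_mul e f : fps C n :=
  fun b => if mexp_le e b then f (mexp_sub b e) else 0.

Lemma mexp_le_add e1 e2 b :
  mexp_le (mexp_add e1 e2) b = mexp_le e2 b && mexp_le e1 (mexp_sub b e2).
Proof.
rewrite /mexp_le; apply/forallP/andP => [le12 | [/forallP le2 /forallP le1] v].
  by split; apply/forallP => v; have := le12 v; rewrite !ffunE; lia.
by have := le1 v; have := le2 v; rewrite !ffunE; lia.
Qed.

Lemma mono_mul_add e1 e2 f b :
  mono_mul (mexp_add e1 e2) f b = mono_mul e2 (mono_mul e1 f) b.
Proof.
rewrite /mono_mul mexp_le_add; case: (mexp_le e2 b) => //=.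
by case: ifP => // _; congr f; apply/ffunP => v; rewrite !ffunE; lia.
Qed.

Lemma mono_mul0 f b : mono_mul (mexp0 n) f b = f b.
Proof.
rewrite /mono_mul (_ : mexp_le _ b); last by apply/forallP => v; rewrite ffunE.
by congr f; apply/ffunP => v; rewrite !ffunE subn0.
Qed.

Lemma pmulE (p : poly_terms C n) f b :
  pmul p f b = \sum_(t <- p) t.1 * mono_mul t.2 f b.
Proof.
by apply: eq_bigr => t _; rewrite /mono_mul; case: ifP; rewrite ?mulr0.
Qed.

Lemma eq_pmul (p : poly_terms C n) f g : f =1 g -> pmul p f =1 pmul p g.
Proof. by move=> eq_fg b; apply: eq_bigr => t _; rewrite eq_fg. Qed.

Lemma pmulD (p : poly_terms C n) f g b :
  pmul p (fun x => f x + g x) b = pmul p f b + pmul p g b.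
Proof.
rewrite !pmulE -big_split /=; apply: eq_bigr => t _.
by rewrite /mono_mul; case: ifP => _; rewrite ?mulrDr ?mulr0 ?addr0.
Qed.

Lemma pmulZ (p : poly_terms C n) c f b :
  pmul p (fun x => c * f x) b = c * pmul p f b.
Proof.
rewrite !pmulE mulr_sumr; apply: eq_bigr => t _.
by rewrite /mono_mul; case: ifP; rewrite ?mulr0 // mulrCA.
Qed.

Lemma pmul_sum (p : poly_terms C n) (I : Type) (r : seq I) (P : pred I)
    (F : I -> fps C n) b :
  pmul p (fun x => \sum_(i <- r | P i) F i x) b = \sum_(i <- r | P i) pmul p (F i) b.
Proof.
rewrite pmulE (eq_bigr (fun t => \sum_(i <- r | P i) t.1 * mono_mul t.2 (F i) b)).
  by rewrite exchange_big /=; apply: eq_bigr => i _; rewrite pmulE.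
move=> t _; rewrite /mono_mul; case: ifP => _; first by rewrite mulr_sumr.
by rewrite mulr0 big1 // => i _; rewrite mulr0.
Qed.

End MonomialMultiplication.
Arguments mono_mul {C n} e f b.

Section PathPolynomials.
Variables (C : fieldType) (n r : nat).
Implicit Types (f : fps C n) (b : mexp n).

Definition pmul_paths_via (a : nat) (s : seq nat) f b : C :=
  \sum_(t <- subseqs s)
    (-1) ^+ size (rcons t r) * mono_mul (path_mono n a (rcons t r)) f b.

Lemma pmul_Ppath_lt a f b : (a < r)%N ->
  pmul (Ppath n a r) f b = pmul_paths_via a (iota a.+1 (r - a.+1)) f b.
Proof. by move=> lt_ar; rewrite pmulE /Ppath (ltn_eqF lt_ar) /paths lt_ar !big_map. Qed.

Lemma pmul_Ppath_id f b : pmul (Ppath n r r) f b = f b.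
Proof. by rewrite pmulE /Ppath eqxx big_seq1 /= mul1r mono_mul0. Qed.

Lemma pmul_paths_via_nil a f b :
  pmul_paths_via a [::] f b = - mono_mul (unit_exp n r a) f b.
Proof. by rewrite /pmul_paths_via /= big_seq1 /= expr1 mulN1r mono_mul_add mono_mul0. Qed.

Lemma pmul_paths_via_cons a x s f b :
  pmul_paths_via a (x :: s) f b =
  - pmul_paths_via x s (mono_mul (unit_exp n x a) f) b + pmul_paths_via a s f b.
Proof.
rewrite /pmul_paths_via /= big_cat big_map /= -sumrN; congr (_ + _).
apply: eq_bigr => t _; rewrite exprS mulN1r mulNr; congr (- (_ * _)).
by rewrite [path_mono _ _ _]/= mono_mul_add.
Qed.

Lemma pmul_paths_via_iota L a f b : (a < r - L)%N ->
  pmul_paths_via a (iota (r - L) L) f b =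
  - \sum_(r - L <= s < r.+1) pmul (Ppath n s r) (mono_mul (unit_exp n s a) f) b.
Proof.
elim: L a f b => [|L IH] a f b lt_a_rL.
  by rewrite subn0 pmul_paths_via_nil big_nat1 pmul_Ppath_id.
have rLS : ((r - L.+1).+1 = r - L)%N by lia.
rewrite /= pmul_paths_via_cons rLS [X in _ + X]IH; last by lia.
rewrite [pmul_paths_via _ _ _ _](_ : _ = pmul (Ppath n (r - L.+1) r)
    (mono_mul (unit_exp n (r - L.+1) a) f) b); last first.
  by rewrite pmul_Ppath_lt ?rLS; [congr (pmul_paths_via _ (iota _ _) _ _) | ]; lia.
by rewrite (@big_ltn _ _ _ (r - L.+1)) ?rLS ?opprD //; lia.
Qed.

Lemma pmul_Ppath_rec a f b : (a < r)%N ->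
  pmul (Ppath n a r) f b =
  - \sum_(a.+1 <= s < r.+1) pmul (Ppath n s r) (mono_mul (unit_exp n s a) f) b.
Proof.
move=> lt_ar; rewrite pmul_Ppath_lt // -{1}(_ : (r - (r - a.+1) = a.+1)%N); last by lia.
by rewrite pmul_paths_via_iota ?subKn //; lia.
Qed.

End PathPolynomials.

Section PathInversion.
Variables (C : fieldType) (n : nat).

Lemma exchange_big_nat_lt (F : nat -> nat -> C) a r :
  \sum_(a <= s < r) \sum_(a <= k < s) F s k =
  \sum_(a <= k < r) \sum_(k.+1 <= s < r) F s k.
Proof.
elim: r => [|r IH]; first by rewrite !big_geq.
have [le_ar | lt_ra] := leqP a r; last by rewrite !big_geq.
rewrite big_nat_recr //= IH [RHS]big_nat_recr //= [X in _ = _ + X]big_geq // addr0.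
rewrite -big_split /=; apply: eq_big_nat => k k_in.
by rewrite big_nat_recr //=; lia.
Qed.

Lemma path_poly_inversion (D T : nat -> fps C n) r2 :
  (forall m, (1 <= m)%N -> (m < r2)%N -> forall b,
     D m b + \sum_(1 <= k < m) mono_mul (unit_exp n m k) (D k) b = T m b) ->
  forall r, (1 <= r)%N -> (r < r2)%N -> forall b,
    D r b = \sum_(1 <= s < r.+1) pmul (Ppath n s r) (T s) b.
Proof.
move=> DT r r_ge1 lt_rr2 b.
rewrite (eq_big_nat _ _ (F2 := fun s => pmul (Ppath n s r)
   (fun x => D s x + \sum_(1 <= k < s) mono_mul (unit_exp n s k) (D k) x) b));
  last by move=> s s_in; apply: eq_pmul => x; rewrite DT //; lia.
under eq_bigr do rewrite pmulD pmul_sum.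
rewrite big_split /= exchange_big_nat_lt -big_split /=.
rewrite big_nat_recr //= pmul_Ppath_id [X in _ + (_ + X)]big_geq // addr0.
rewrite big1_seq ?add0r // => k /=; rewrite mem_index_iota => /andP[_ lt_kr].
by rewrite pmul_Ppath_rec //; apply: addNr.
Qed.

End PathInversion.

Section Contiguity.
Variables (C : numFieldType) (n : nat).
Implicit Types (b : mexp n) (tau : nat -> C) (th : C).

(* beta! times the coefficient of z^beta in X_A, as a function of the
   profiles U = beta_(underline .) and O = beta_(overline .). *)
Definition XAnum tau th (U O : nat -> nat) : C :=
  (\prod_(1 <= s < n) rising (tau s - (U s)%:R) (O s))
  * rising (tau n) (U n) / rising th (U n).

Lemma XAE tau th b :
  XA n tau th b = XAnum tau th (Defs.under b) (Defs.over b) / (mfact b)%:R.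
Proof. by rewrite /XA /XAnum invfM [_^-1 * _]mulrC !mulrA. Qed.

Lemma mfact_neq0 b : (mfact b)%:R != 0 :> C.
Proof.
rewrite pnatr_eq0 -lt0n; apply: prodn_cond_gt0 => v _; exact: fact_gt0.
Qed.

Lemma dz_XA tau th r2 m b : (1 <= m)%N -> (m < r2)%N -> (r2 <= n)%N ->
  dz n r2 m (XA n tau th) b =
  XAnum tau th (fun i => Defs.under b i + (i == r2))%N
               (fun i => Defs.over b i + (i == m))%N / (mfact b)%:R.
Proof.
move=> m_ge1 lt_mr2 le_r2n.
rewrite /dz XAE mfact_add_unit_exp // natrM.
have -> : Defs.under (mexp_add b (unit_exp n r2 m)) =
          (fun i => Defs.under b i + (i == r2))%N.
  by apply: funext => i; rewrite under_mexp_add under_unit_exp.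
have -> : Defs.over (mexp_add b (unit_exp n r2 m)) =
          (fun i => Defs.over b i + (i == m))%N.
  by apply: funext => i; rewrite over_mexp_add over_unit_exp.
have := mfact_neq0 b; have : (ex b r2 m).+1%:R != 0 :> C by rewrite pnatr_eq0.
move: (XAnum _ _ _ _) (_%:R) (_%:R) => P x M x_neq0 M_neq0.
by field; rewrite x_neq0 M_neq0.
Qed.

Lemma mono_mul_dz_XA tau th r2 m k b :
  (1 <= k)%N -> (k < m)%N -> (m < r2)%N -> (r2 <= n)%N ->
  mono_mul (unit_exp n m k) (dz n r2 k (XA n tau th)) b =
  (ex b m k)%:R
  * XAnum tau th (fun i => Defs.under b i - (i == m) + (i == r2))%N (Defs.over b)
  / (mfact b)%:R.
Proof.
move=> k_ge1 lt_km lt_mr2 le_r2n.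
have le_mn : (m <= n)%N by lia.
rewrite /mono_mul; case: ifPn => [le_b | not_le]; last first.
  by rewrite ex_eq0_unit_exp // !mul0r.
move: (mexp_sub b _) (mexp_subK _ _ le_b) => c <- {le_b}.
rewrite /dz XAE.
rewrite (mfact_add_unit_exp r2) ?(mfact_add_unit_exp m); try lia.
rewrite ex_mexp_add ex_unit_exp // !eqxx addn1 !natrM.
have -> : Defs.under (mexp_add c (unit_exp n r2 k)) = (fun i =>
    Defs.under (mexp_add c (unit_exp n m k)) i - (i == m) + (i == r2))%N.
  by apply: funext => i; rewrite !under_mexp_add !under_unit_exp; lia.
have -> : Defs.over (mexp_add c (unit_exp n r2 k)) =
          Defs.over (mexp_add c (unit_exp n m k)).
  by apply: funext => i; rewrite !over_mexp_add !over_unit_exp //; lia.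
have := mfact_neq0 c.
have : (ex c r2 k).+1%:R != 0 :> C by rewrite pnatr_eq0.
have : (ex c m k).+1%:R != 0 :> C by rewrite pnatr_eq0.
move: (XAnum _ _ _ _) (mfact c)%:R (_%:R) (_%:R) => P M x y y_neq0 x_neq0 M_neq0.
by field; rewrite M_neq0 x_neq0 y_neq0.
Qed.

Lemma prod_nat_split1 (F g : nat -> C) a c m : (a <= m < c)%N ->
  (forall s, (a <= s < c)%N -> s != m -> F s = g s) ->
  \prod_(a <= s < c) F s = F m * \prod_(a <= s < c) (if s == m then 1 else g s).
Proof.
move=> m_in Fg; rewrite (bigD1_seq m) ?mem_index_iota ?iota_uniq //=.
congr (_ * _); rewrite big_mkcond /=; apply: eq_big_nat => s s_in.
by case: eqP => [//|/eqP s_m]; rewrite /= Fg.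
Qed.

Lemma prod_nat_split2 (F g : nat -> C) a c m r :
  (a <= m < c)%N -> (a <= r < c)%N -> m != r ->
  (forall s, (a <= s < c)%N -> s != m -> s != r -> F s = g s) ->
  \prod_(a <= s < c) F s =
  F m * (F r * \prod_(a <= s < c) (if s == m then 1 else if s == r then 1 else g s)).
Proof.
move=> m_in r_in m_r Fg.
rewrite (@prod_nat_split1 F (fun s => if s == r then F r else g s) a c m) //;
  last by move=> s s_in s_m; case: eqP => [->|/eqP s_r] //; apply: Fg.
rewrite (@prod_nat_split1 _ (fun s => if s == m then 1 else if s == r then 1 else g s) a c r) //;
  last by move=> s _ /negbTE ->.
rewrite eq_sym (negbTE m_r) eqxx; congr (_ * (_ * _)); apply: eq_big_nat => s _.
by case: (s == r); case: (s == m).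
Qed.

Lemma risingS (c : C) k : rising c k.+1 = c * rising (c + 1) k.
Proof.
rewrite /rising big_nat_recl //= addr0; congr (_ * _).
by apply: eq_bigr => i _; rewrite -nat1r addrA.
Qed.

Lemma XAnum_contiguity tau th (U O : nat -> nat) m r2 :
  (1 <= m)%N -> (m < r2)%N -> (r2 < n)%N ->
  XAnum tau th (fun i => U i + (i == r2))%N (fun i => O i + (i == m))%N
  + (U m)%:R * XAnum tau th (fun i => U i - (i == m) + (i == r2))%N O
  = tau m * XAnum (upd (upd tau m (tau m + 1)) r2 (tau r2 - 1)) th U O.
Proof.
move=> m_ge1 lt_mr2 lt_r2n.
have m_r2 : m != r2 by rewrite neq_ltn lt_mr2.
have m_in : (1 <= m < n)%N by lia.
have r2_in : (1 <= r2 < n)%N by lia.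
pose g s := rising (tau s - (U s)%:R) (O s).
rewrite /XAnum.
rewrite (@prod_nat_split2 _ g 1 n m r2) //;
  last by move=> s _ /negbTE s_m /negbTE s_r2; rewrite /g s_m s_r2 !addn0.
rewrite [X in _ + _ * (X * _ / _)](@prod_nat_split2 _ g 1 n m r2) //;
  last by move=> s _ /negbTE s_m /negbTE s_r2; rewrite /g s_m s_r2 !addn0 subn0.
rewrite [X in _ = _ * (X * _ / _)](@prod_nat_split2 _ g 1 n m r2) //;
  last by move=> s _ /negbTE s_m /negbTE s_r2; rewrite /g /upd s_m s_r2.
rewrite /upd !eqxx (negbTE m_r2) eq_sym (negbTE m_r2) (gtn_eqF lt_r2n).
rewrite (gtn_eqF (ltn_trans lt_mr2 lt_r2n)) /= !addn0 !addn1 !subn0 risingS.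
have -> : tau r2 - (U r2).+1%:R = tau r2 - 1 - (U r2)%:R by rewrite -natr1; ring.
case: (U m) => [|u]; first by rewrite mul0r addr0 !subr0 !mulrA.
rewrite subn1 /= -natr1.
have -> : tau m - u%:R = tau m - (u%:R + 1) + 1 by ring.
have -> : tau m + 1 - (u%:R + 1) = tau m - (u%:R + 1) + 1 by ring.
ring.
Qed.

Lemma XAnum_contiguity_last tau th (U O : nat -> nat) m :
  (1 <= m)%N -> (m < n)%N ->
  XAnum tau th (fun i => U i + (i == n))%N (fun i => O i + (i == m))%N
  + (U m)%:R * XAnum tau th (fun i => U i - (i == m) + (i == n))%N O
  = tau n / th * (tau m * XAnum (upd (upd tau m (tau m + 1)) n (tau n + 1)) (th + 1) U O).
Proof.
move=> m_ge1 lt_mn.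
have m_in : (1 <= m < n)%N by lia.
pose g s := rising (tau s - (U s)%:R) (O s).
have s_n s : (1 <= s < n)%N -> (s == n) = false by case/andP => _ /ltn_eqF.
rewrite /XAnum.
rewrite (@prod_nat_split1 _ g 1 n m) //;
  last by move=> s /s_n s_n' /negbTE s_m; rewrite /g s_m s_n' !addn0.
rewrite [X in _ + _ * (X * _ / _)](@prod_nat_split1 _ g 1 n m) //;
  last by move=> s /s_n s_n' /negbTE s_m; rewrite /g s_m s_n' !addn0 subn0.
rewrite [X in _ = _ * (_ * (X * _ / _))](@prod_nat_split1 _ g 1 n m) //;
  last by move=> s /s_n s_n' /negbTE s_m; rewrite /g /upd s_m s_n'.
rewrite /upd !eqxx (ltn_eqF lt_mn) eq_sym (ltn_eqF lt_mn) /=.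
rewrite !addn0 !addn1 !subn0 !risingS !invfM.
case: (U m) => [|u]; first by rewrite mul0r addr0 !subr0; ring.
rewrite subn1 /= -natr1.
have -> : tau m - u%:R = tau m - (u%:R + 1) + 1 by ring.
have -> : tau m + 1 - (u%:R + 1) = tau m - (u%:R + 1) + 1 by ring.
ring.
Qed.

Lemma dz_XA_local tau th r2 m b : (1 <= m)%N -> (m < r2)%N -> (r2 <= n)%N ->
  dz n r2 m (XA n tau th) b
  + \sum_(1 <= k < m) mono_mul (unit_exp n m k) (dz n r2 k (XA n tau th)) b =
  (XAnum tau th (fun i => Defs.under b i + (i == r2))%N
                (fun i => Defs.over b i + (i == m))%N
   + (Defs.under b m)%:R
     * XAnum tau th (fun i => Defs.under b i - (i == m) + (i == r2))%N (Defs.over b))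
  / (mfact b)%:R.
Proof.
move=> m_ge1 lt_mr2 le_r2n.
rewrite dz_XA // (eq_big_nat _ _ (F2 := fun k => (ex b m k)%:R
  * XAnum tau th (fun i => Defs.under b i - (i == m) + (i == r2))%N (Defs.over b)
  / (mfact b)%:R)); last by move=> k k_in; apply: mono_mul_dz_XA; lia.
by rewrite -!mulr_suml -natr_sum mulrDl.
Qed.

End Contiguity.

Lemma big_fps_addE (C : fieldType) (n : nat) (I : Type) (r : seq I) (P : pred I)
    (F : I -> fps C n) b :
  (\big[fps_add/fps0]_(i <- r | P i) F i) b = \sum_(i <- r | P i) F i b.
Proof.
elim: r => [|x r IH]; first by rewrite !big_nil.
by rewrite !big_cons; case: (P x); rewrite /fps_add IH.
Qed.

Theorem theorem5p1 (R : realType) (n : nat) (tau : nat -> R[i]) (th : R[i]) :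
  (2 <= n)%N ->
  (forall m : nat, th != - m%:R) ->
  (forall r1 r2 : nat, (1 <= r1)%N -> (r1 < r2)%N -> (r2 <= n.-1)%N ->
     dz n r2 r1 (XA n tau th) =
     \big[fps_add/fps0]_(1 <= s < r1.+1)
        fps_scale (tau s) (pmul (Ppath n s r1) (XAsh n tau th s r2)))
  /\
  (forall r : nat, (1 <= r)%N -> (r <= n.-1)%N ->
     dz n n r (XA n tau th) =
     fps_scale (tau n / th)
       (\big[fps_add/fps0]_(1 <= s < r.+1)
          fps_scale (tau s) (pmul (Ppath n s r) (XAsh n tau th s n)))).
Proof.
move=> _ _; split.
- move=> r1 r2 r1_ge1 lt_r1r2 le_r2n; apply: funext => b.
  rewrite big_fps_addE; under eq_bigr do rewrite /fps_scale -pmulZ.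
  apply: (@path_poly_inversion _ n (fun k => dz n r2 k (XA n tau th))
    (fun s x => tau s * XAsh n tau th s r2 x) r2) => // m m_ge1 lt_mr2 b'.
  have lt_r2n : (r2 < n)%N by lia.
  rewrite dz_XA_local ?(ltnW lt_r2n) // (@XAnum_contiguity _ n tau th _ _ m r2) //.
  by rewrite /XAsh lt_r2n XAE [RHS]mulrA.
- move=> r r_ge1 le_rn; apply: funext => b.
  rewrite /fps_scale big_fps_addE mulr_sumr; under eq_bigr do rewrite -!pmulZ.
  apply: (@path_poly_inversion _ n (fun k => dz n n k (XA n tau th))
    (fun s x => tau n / th * (tau s * XAsh n tau th s n x)) n); try lia.
  move=> m m_ge1 lt_mn b'.
  rewrite dz_XA_local // (@XAnum_contiguity_last _ n tau th _ _ m) //.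
  by rewrite /XAsh ltnn XAE !mulrA.
Qed.
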